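(* Let $n$ be a positive integer and let $r_\star$ be an integer maximising $q_n^r$ over $r$. Then either \[ r_\star = \left\lceil \frac{1}{10}\left(5n+2-\sqrt{5n^2+20n+24}\right)\right\rceil \] or \[ r_\star = \frac{1}{10}\left(5n+2-\sqrt{5n^2+20n+24}\right)+1. \]
   Context: $P_n$ is the path on $[n]=\{1,\dots,n\}$ with edges $\{i,i+1\}$. $Q^{(r)}(P_n)$ is the family of $r$-element subsets of $[n]$ containing no two consecutive integers, and $q_n^r=|Q^{(r)}(P_n)|$. *)

From HB Require Import structures.
From mathcomp Require Import all_boot all_order all_algebra.
From mathcomp Require Import reals.
Set Implicit Arguments. Unset Strict Implicit. Unset Printing Implicit Defensive.

(* The path P_n on [n] = {1,...,n} is modelled on 'I_n = {0,...,n-1}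
   (shift by one); edges {i, i+1}. *)

Definition Qr (n r : nat) : {set {set 'I_n}} :=
  [set A : {set 'I_n} | (#|A| == r) &&
     [forall i in A, forall j in A, (val i).+1 != val j]].

Definition q (n r : nat) : nat := #|Qr n r|.

From HB Require Import structures.
From mathcomp Require Import all_boot all_order all_algebra.
From mathcomp Require Import reals.
From mathcomp Require Import zify ring lra.
Set Implicit Arguments. Unset Strict Implicit. Unset Printing Implicit Defensive.

(* Splitting on whether the last vertex is used gives
   q_(n+2)^(r+1) = q_(n+1)^(r+1) + q_n^r, hence q_n^r = C(n+1-r, r).  Then
   q_n^(r+1) / q_n^r = (n-2r)(n+1-2r) / ((r+1)(n+1-r)), which exceeds 1 exactly
   when 5r^2 - (5n+2)r + n^2 - 1 > 0.  The larger root of this quadratic lies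
   beyond n/2, where q_n^r vanishes, so a maximiser r lies between the smaller
   root x and x + 1: it is ceil x, or x + 1 when x + 1 is an integer. *)

Definition no_consecutive n (A : {set 'I_n}) : bool :=
  [forall i in A, forall j in A, (val i).+1 != val j].

Lemma in_Qr n r (A : {set 'I_n}) : (A \in Qr n r) = (#|A| == r) && no_consecutive A.
Proof. by rewrite inE. Qed.

Lemma no_consecutiveP n (A : {set 'I_n}) :
  reflect (forall i j, i \in A -> j \in A -> (val i).+1 != val j) (no_consecutive A).
Proof.
apply: (iffP forall_inP) => [H i j iA jA | H i iA].
  exact: (forall_inP (H i iA)).
by apply/forall_inP => j; apply: H.
Qed.

Lemma no_consecutive_subset n (A B : {set 'I_n}) :
  B \subset A -> no_consecutive A -> no_consecutive B.
Proof.
move=> /subsetP sBA /no_consecutiveP nA; apply/no_consecutiveP => i j iB jB.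
exact: nA (sBA _ iB) (sBA _ jB).
Qed.

Lemma widen_ord_inj m M (h : (m <= M)%N) : injective (widen_ord h).
Proof. by move=> i j /(congr1 val) /= /val_inj. Qed.

Lemma no_consecutive_widen m M (h : (m <= M)%N) (B : {set 'I_m}) :
  no_consecutive (widen_ord h @: B) = no_consecutive B.
Proof.
apply/no_consecutiveP/no_consecutiveP => nB i j.
  by move=> iB jB; apply: nB (imset_f _ iB) (imset_f _ jB).
by move=> /imsetP[i' iB ->] /imsetP[j' jB ->]; apply: nB.
Qed.

Lemma widen_ord_Qr m M r (h : (m <= M)%N) (B : {set 'I_m}) :
  (widen_ord h @: B \in Qr M r) = (B \in Qr m r).
Proof. by rewrite !in_Qr card_imset ?no_consecutive_widen //; apply: widen_ord_inj. Qed.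

Lemma card_Qr_below m M r (h : (m <= M)%N) :
  #|[set A in Qr M r | A \subset [set i : 'I_M | (i < m)%N]]| = q m r.
Proof.
suff -> : [set A in Qr M r | A \subset [set i : 'I_M | (i < m)%N]] =
          (fun B : {set 'I_m} => widen_ord h @: B) @: Qr m r.
  exact/card_imset/imset_inj/widen_ord_inj.
apply/setP => A; rewrite inE; apply/andP/imsetP => [[QA /subsetP Am] | [B QB ->]].
  suff wA : widen_ord h @: (widen_ord h @^-1: A) = A.
    by exists (widen_ord h @^-1: A); rewrite -?(widen_ord_Qr _ h) wA.
  apply/setP => i; apply/imsetP/idP => [[j + ->] | iA]; first by rewrite inE.
  have im : (i < m)%N by have := Am i iA; rewrite inE.
  have wi : widen_ord h (Ordinal im) = i by apply: val_inj.
  by exists (Ordinal im); rewrite ?inE wi.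
rewrite widen_ord_Qr QB; split=> //.
by apply/subsetP => _ /imsetP[i _ ->]; rewrite inE /=.
Qed.

Lemma no_consecutive_setU1_max n (B : {set 'I_n.+2}) :
  B \subset [set i : 'I_n.+2 | (i < n)%N] ->
  no_consecutive (ord_max |: B) = no_consecutive B.
Proof.
move=> /subsetP Bn; apply/idP/idP; first exact/no_consecutive_subset/subsetUr.
move=> /no_consecutiveP nB; apply/no_consecutiveP => i j.
have lt i' : i' \in B -> (i' < n)%N by move=> /Bn; rewrite inE.
rewrite !in_setU1 => /predU1P[-> _ | iB /predU1P[-> | jB]].
- by rewrite /= neq_ltn ltn_ord orbT.
- by rewrite /= eqSS neq_ltn lt.
- exact: nB.
Qed.

Lemma q0 n : q n 0 = 1.
Proof.
rewrite /q (_ : Qr n 0 = [set set0]) ?cards1 //.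
apply/setP => A; rewrite in_Qr in_set1 cards_eq0 andb_idr // => /eqP ->.
by apply/no_consecutiveP => i j; rewrite inE.
Qed.

Lemma q1 n : q n 1 = n.
Proof.
rewrite /q (_ : Qr n 1 = [set A : {set 'I_n} | #|A| == 1%N]).
  by rewrite card_draws card_ord bin1.
apply/setP => A; rewrite in_Qr inE andb_idr // => /cards1P[i ->].
by apply/no_consecutiveP => j k /set1P -> /set1P ->; rewrite eqn_leq ltnn.
Qed.

Lemma q_small n r : (n < r)%N -> q n r = 0.
Proof.
move=> nr; apply/eqP; rewrite cards_eq0; apply/eqP/setP => A; rewrite in_Qr inE.
apply/negbTE/nandP; left; rewrite neq_ltn; apply/orP; left.
by apply: leq_ltn_trans nr; rewrite -[X in (_ <= X)%N]card_ord max_card.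
Qed.

Lemma subset_below_max n (A : {set 'I_n.+1}) :
  (A \subset [set i : 'I_n.+1 | (i < n)%N]) = (ord_max \notin A).
Proof.
apply/subsetP/idP => [sA | mA i iA]; first by apply/negP => /sA; rewrite inE ltnn.
rewrite inE ltn_neqAle -ltnS ltn_ord andbT.
by apply: contraNneq mA => e; rewrite (_ : ord_max = i) //; apply: val_inj.
Qed.

Lemma max_notin_below n (B : {set 'I_n.+2}) :
  B \subset [set i : 'I_n.+2 | (i < n)%N] -> ord_max \notin B.
Proof. by move=> /subsetP Bn; apply/negP => /Bn; rewrite inE /= ltnNge leqnSn. Qed.

Lemma Qr_with_max n r :
  Qr n.+2 r.+1 :&: [set A : {set 'I_n.+2} | ord_max \in A] =
  (fun B : {set 'I_n.+2} => ord_max |: B) @: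
    [set B in Qr n.+2 r | B \subset [set i : 'I_n.+2 | (i < n)%N]].
Proof.
apply/setP => A; rewrite in_setI [X in _ && X]inE; apply/andP/imsetP => [[QA mA] | [B]].
  exists (A :\ ord_max); last by rewrite setD1K.
  rewrite inE !in_Qr; move: QA; rewrite in_Qr (cardsD1 ord_max) mA add1n eqSS => /andP[-> nA].
  rewrite (no_consecutive_subset (subsetDl _ _) nA); apply/subsetP => i /setD1P[im iA].
  have in1 : (i < n.+1)%N.
    rewrite ltnNge; apply: contra im => ni; apply/eqP/val_inj; have := ltn_ord i; rewrite /=; lia.
  rewrite inE ltn_neqAle -ltnS in1 andbT; apply: contraTneq iA => ein.
  by apply: contraTN nA => iA; apply/no_consecutiveP => /(_ i ord_max iA mA); rewrite /= ein eqxx.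
rewrite inE in_Qr => /andP[/andP[cB nB] Bn] ->.
have mB := max_notin_below Bn.
rewrite in_Qr cardsU1 mB (eqP cB) no_consecutive_setU1_max // setU11.
by rewrite add1n eqxx; split.
Qed.

Lemma q_recurrence n r : q n.+2 r.+1 = q n.+1 r.+1 + q n r.
Proof.
rewrite [q n.+2 _]/q -(cardsID [set A : {set 'I_n.+2} | ord_max \in A] (Qr n.+2 r.+1)) addnC.
congr (_ + _).
  rewrite -(card_Qr_below _ (leqnSn n.+1)); congr #|pred_of_set _|; apply/setP => A.
  by rewrite in_setD in_set [in RHS]inE subset_below_max andbC.
rewrite (Qr_with_max n r) card_in_imset; first exact: card_Qr_below _ (leqW (leqnSn n)).
move=> B1 B2; rewrite !inE => /andP[_ /max_notin_below B1n] /andP[_ /max_notin_below B2n].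
by move=> /(congr1 (fun A => A :\ ord_max)); rewrite !setU1K.
Qed.

Lemma q_binomial n r : q n r = 'C(n.+1 - r, r).
Proof.
elim/ltn_ind: n r => n IH [|r]; first by rewrite q0 bin0.
have [nr | rn] := ltnP n r.+1; first by rewrite q_small // bin_small //; lia.
case: n IH rn => [|[|n]] IH rn; first by [].
  by case: r rn => // _; rewrite q1.
by rewrite q_recurrence !IH // !subSS (@subSn r n.+1) // binS.
Qed.

Lemma q_gt0 n r : (0 < q n r)%N = (r.*2 <= n.+1)%N.
Proof. by rewrite q_binomial bin_gt0; apply/idP/idP; lia. Qed.

Lemma q_succ_ratio n r :
  q n r.+1 * (r.+1 * (n.+1 - r)) = q n r * ((n - r.*2) * (n.+1 - r.*2)).
Proof.
have [nr | rn] := ltnP n r.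
  have -> : q n r.+1 = 0 by apply: q_small; lia.
  have -> : (n - r.*2 = 0)%N by lia.
  by rewrite mul0n muln0.
rewrite !q_binomial subSS -addnn !subnDA (subSn rn).
set N := (n - r)%N.
have := mul_bin_down N.+1 r; rewrite /= => bin_down.
rewrite mulnA (mulnC _ r.+1) mul_bin_left -mulnA (mulnC _ N.+1) bin_down.
by rewrite mulnA mulnC.
Qed.

Lemma q_succ_le_ratio n r : (0 < q n r)%N -> (q n r.+1 <= q n r)%N ->
  ((n - r.*2) * (n.+1 - r.*2) <= r.+1 * (n.+1 - r))%N.
Proof.
by move=> qr_gt0 le; rewrite -(leq_pmul2l qr_gt0) -q_succ_ratio leq_mul.
Qed.

Lemma q_le_succ_ratio n r : (0 < q n r.+1)%N -> (q n r <= q n r.+1)%N ->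
  (r.+1 * (n.+1 - r) <= (n - r.*2) * (n.+1 - r.*2))%N.
Proof.
by move=> qr_gt0 le; rewrite -(leq_pmul2l qr_gt0) q_succ_ratio leq_mul.
Qed.

Import Order.TTheory GRing.Theory Num.Theory.
Local Open Scope ring_scope.

(* The smaller root of 5t^2 - (5n+2)t + n^2 - 1. *)
Definition q_root (R : rcfType) (n : nat) : R :=
  (5 * n%:R + 2 - Num.sqrt (5 * n%:R ^+ 2 + 20 * n%:R + 24)) / 10.

Section Root.
Variables (R : rcfType) (n r : nat).
Let s : R := Num.sqrt (5 * n%:R ^+ 2 + 20 * n%:R + 24).

Let s_ge0 : 0 <= s. Proof. exact: sqrtr_ge0. Qed.
Let s_sqr : s ^+ 2 = 5 * n%:R ^+ 2 + 20 * n%:R + 24.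
Proof. by apply: sqr_sqrtr; have : 0 <= n%:R :> R by []; nra. Qed.

Lemma sqr_sqrt_gap k : n = (r.*2 + k)%N ->
  s ^+ 2 - (5 * k%:R + 2) ^+ 2 =
  20 * ((r.+1 * (n.+1 - r))%:R - ((n - r.*2) * (n.+1 - r.*2))%:R).
Proof.
move=> nE; rewrite s_sqr nE.
have -> : (r.*2 + k - r.*2 = k)%N by lia.
have -> : ((r.*2 + k).+1 - r.*2 = k.+1)%N by lia.
have -> : ((r.*2 + k).+1 - r = r + k.+1)%N by lia.
by rewrite !natrM !natrD -mul2n natrM -!natr1; ring.
Qed.

Lemma q_root_le : ((n - r.*2) * (n.+1 - r.*2) <= r.+1 * (n.+1 - r))%N -> q_root R n <= r%:R.
Proof.
rewrite /q_root -/s ler_pdivrMr // -(ler_nat R) -subr_ge0 => gap_ge0.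
have [nr | rn] := leqP n r.*2.
  have : n%:R <= 2 * r%:R :> R by rewrite -natrM ler_nat mul2n.
  have s_ge2 : 2 <= s by have := s_sqr; have := s_ge0; have : 0 <= n%:R :> R by []; nra.
  lra.
have [k nE] : exists k, n = (r.*2 + k)%N by exists (n - r.*2)%N; lia.
have nR : n%:R = 2 * r%:R + k%:R :> R by rewrite nE natrD -mul2n natrM.
have := sqr_sqrt_gap nE; have := s_ge0; have : 0 <= k%:R :> R by []; nra.
Qed.

Lemma le_q_root : (r.*2 <= n)%N ->
  (r.+1 * (n.+1 - r) <= (n - r.*2) * (n.+1 - r.*2))%N -> r%:R <= q_root R n.
Proof.
move=> rn; rewrite /q_root -/s ler_pdivlMr // -(ler_nat R) -subr_ge0 => gap_le0.
have [k nE] : exists k, n = (r.*2 + k)%N by exists (n - r.*2)%N; lia.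
have nR : n%:R = 2 * r%:R + k%:R :> R by rewrite nE natrD -mul2n natrM.
have := sqr_sqrt_gap nE; have := s_ge0; have : 0 <= k%:R :> R by []; nra.
Qed.

End Root.

Lemma eq_ceil_or_succ (R : archiFieldType) (x : R) (m : int) :
  x <= m%:~R -> m%:~R <= x + 1 -> m = Num.ceil x \/ m%:~R = x + 1.
Proof.
move=> xm mx; have [|ne] := eqVneq m%:~R (x + 1); [by right | left].
have mx_lt : m%:~R < x + 1 by rewrite lt_neqAle ne mx.
suff -> : Num.ceil x = m by [].
by apply: ceil_def; rewrite xm andbT intrB; lra.
Qed.

Theorem mainTheorem3 (R : realType) (n rs : nat) :
  (0 < n)%N ->
  (forall r : nat, (q n r <= q n rs)%N) ->
  let x : R := (5 * n%:R + 2 - Num.sqrt (5 * n%:R ^+ 2 + 20 * n%:R + 24)) / 10 in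
  rs%:~R = (Num.ceil x)%:~R :> R \/ rs%:R = x + 1.
Proof.
move=> n_gt0 rs_max x.
have q_rs_gt0 : (0 < q n rs)%N by apply: leq_trans (rs_max 0%N); rewrite q0.
have x_le_rs : x <= rs%:R by apply/q_root_le/q_succ_le_ratio/rs_max.
have rs_le_x1 : rs%:R <= x + 1.
  case: rs rs_max q_rs_gt0 {x_le_rs} => [|r] rs_max qr1_gt0.
    have : 0 <= x by apply: (@le_q_root _ _ 0) => //; rewrite double0 !subn0 mul1n leq_pmull.
    lra.
  have r_le_x : r%:R <= x.
    apply: le_q_root (q_le_succ_ratio qr1_gt0 (rs_max r)).
    by move: qr1_gt0; rewrite q_gt0; lia.
  by rewrite -natr1; lra.
by case: (eq_ceil_or_succ (m := rs) x_le_rs rs_le_x1) => [<-|]; [left | right].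
Qed.
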